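(* Every finite simple graph possesses an admissible ordering of its edges.
   Context: An admissible edge ordering of a graph $G$ is a total order $\succ$ on $E(G)$ such that for any edges $\{a,b\},\{c,d\}$ with $\{a,b\}\cap\{c,d\}=\emptyset$ and $\{a,b\}\succ\{c,d\}$, either all edges incident to $a$ are larger than $\{c,d\}$ or all edges incident to $b$ are larger than $\{c,d\}$. *)

From mathcomp Require Import all_boot.
Set Implicit Arguments. Unset Strict Implicit. Unset Printing Implicit Defensive.

Definition simple_graph (T : finType) (adj : rel T) : Prop :=
  symmetric adj /\ irreflexive adj.

Definition is_edge (T : finType) (adj : rel T) (E : {set T}) : bool :=
  [exists x, exists y, adj x y && (E == [set x; y])].

Definition strict_total_order_on_edges (T : finType) (adj : rel T)
    (gt : rel {set T}) : Prop :=
  (forall E, is_edge adj E -> ~~ gt E E) /\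
  (forall E F H, is_edge adj E -> is_edge adj F -> is_edge adj H ->
     gt E F -> gt F H -> gt E H) /\
  (forall E F, is_edge adj E -> is_edge adj F -> E != F -> gt E F || gt F E).

Definition admissible_edge_ordering (T : finType) (adj : rel T)
    (gt : rel {set T}) : Prop :=
  strict_total_order_on_edges adj gt /\
  forall a b c d : T, adj a b -> adj c d ->
    [disjoint [set a; b] & [set c; d]] ->
    gt [set a; b] [set c; d] ->
    (forall x, adj a x -> gt [set a; x] [set c; d]) \/
    (forall x, adj b x -> gt [set b; x] [set c; d]).

From mathcomp Require Import all_boot.
Set Implicit Arguments. Unset Strict Implicit. Unset Printing Implicit Defensive.

(* Rank the vertices and order vertex sets lexicographically: E is larger
   than F when the lowest-ranked vertex at which they differ lies in E.
   If {a,b} is larger than a disjoint {c,d}, then the lowest-ranked of the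
   four vertices lies in {a,b}, and every edge through that vertex is
   larger than {c,d}. *)

Section LexOrder.

Variables (T : finType) (r : T -> nat).
Hypothesis r_inj : injective r.

Definition lex_gt (E F : {set T}) : bool :=
  [exists x in E :\: F, [forall y, (r y < r x) ==> ((y \in E) == (y \in F))]].

Lemma lex_gtP (E F : {set T}) :
  reflect (exists x, [/\ x \in E, x \notin F &
                        forall y, r y < r x -> (y \in E) = (y \in F)])
          (lex_gt E F).
Proof.
apply: (iffP existsP) => [[x /andP[xEF /forallP agree]] | [x [xE xF agree]]].
  move: xEF; rewrite inE => /andP[xF xE]; exists x; split=> // y lt_yx.
  by apply/eqP; exact: implyP (agree y) lt_yx.
exists x; rewrite inE xE xF /=; apply/forallP => y; apply/implyP => lt_yx.
by rewrite agree.
Qed.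

Lemma lex_gt_irr (E : {set T}) : ~~ lex_gt E E.
Proof. by apply/lex_gtP => -[x [xE xNE _]]; rewrite xE in xNE. Qed.

Lemma lex_gt_trans (E F G : {set T}) : lex_gt E F -> lex_gt F G -> lex_gt E G.
Proof.
move=> /lex_gtP[x [xE xF agreeEF]] /lex_gtP[y [yF yG agreeFG]]; apply/lex_gtP.
case: (ltngtP (r x) (r y)) => [lt_xy | lt_yx | /r_inj eq_xy].
- exists x; split=> //; first by rewrite -(agreeFG x lt_xy).
  move=> z lt_zx; rewrite agreeEF ?agreeFG //; exact: ltn_trans lt_xy.
- exists y; split=> //; first by rewrite (agreeEF y lt_yx).
  move=> z lt_zy; rewrite agreeEF ?agreeFG //; exact: ltn_trans lt_yx.
- by rewrite eq_xy yF in xF.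
Qed.

Lemma lex_gt_total (E F : {set T}) : E != F -> lex_gt E F || lex_gt F E.
Proof.
move=> neqEF.
pose differ := [pred w | (w \in E) != (w \in F)].
have [z differ_z] : exists z, differ z.
  apply/existsP; apply: contraR neqEF; rewrite negb_exists => /forallP same.
  by apply/eqP/setP => z; apply/eqP; rewrite -[_ == _]negbK same.
case: (@arg_minnP _ z differ r differ_z) => x differ_x min_x.
have agree y : r y < r x -> (y \in E) = (y \in F).
  by move=> lt_yx; apply/eqP; apply: contraTT lt_yx => /min_x; rewrite -leqNgt.
move: differ_x => /=; case xE: (x \in E); case xF: (x \in F) => // _.
  by apply/orP; left; apply/lex_gtP; exists x; rewrite xF.
by apply/orP; right; apply/lex_gtP; exists x; rewrite xE; split=> // y /agree.
Qed.

Lemma lex_gt_below (E F : {set T}) (z : T) :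
  z \in E -> (forall y, y \in F -> r z < r y) -> lex_gt E F.
Proof.
move=> zE below_F; case: (@arg_minnP _ z [pred w | w \in E] r zE) => x xE min_x.
have notF y : r y <= r z -> y \notin F.
  by move=> le_yz; apply: contraTN le_yz => /below_F; rewrite -ltnNge.
apply/lex_gtP; exists x; split=> //; first exact/notF/min_x.
move=> y lt_yx; rewrite (negbTE (notF y _)); last first.
  by apply: leq_trans (ltnW lt_yx) (min_x z zE).
by apply: contraTF lt_yx => /min_x; rewrite -leqNgt.
Qed.

Lemma lex_gt_disjoint_below (E F : {set T}) :
  [disjoint E & F] -> lex_gt E F ->
  exists2 z, z \in E & forall y, y \in F -> r z < r y.
Proof.
move=> disjEF /lex_gtP[z [zE zF agree]]; exists z => // y yF.
case: (ltngtP (r z) (r y)) => // [lt_yz | /r_inj eq_zy].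
  by move: (agree y lt_yz); rewrite yF (disjointFl disjEF yF).
by rewrite eq_zy yF in zF.
Qed.

Lemma lex_gt_strict_total_order (adj : rel T) :
  strict_total_order_on_edges adj lex_gt.
Proof.
split; first by move=> E _; exact: lex_gt_irr.
split; first by move=> E F G _ _ _; exact: lex_gt_trans.
by move=> E F _ _; exact: lex_gt_total.
Qed.

Lemma lex_gt_admissible (adj : rel T) : admissible_edge_ordering adj lex_gt.
Proof.
split; first exact: lex_gt_strict_total_order.
move=> a b c d _ _ disj /(lex_gt_disjoint_below disj)[z].
rewrite !inE => /orP[] /eqP-> below_cd.
  by left=> x _; apply: (lex_gt_below (set21 a x)).
by right=> x _; apply: (lex_gt_below (set21 b x)).
Qed.

End LexOrder.

Lemma val_enum_rank_inj (T : finType) : injective (fun x : T => val (enum_rank x)).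
Proof. by move=> x y /val_inj/enum_rank_inj. Qed.

Theorem lemma6p2 (T : finType) (adj : rel T) :
  simple_graph adj ->
  exists gt : rel {set T}, admissible_edge_ordering adj gt.
Proof.
(* Admissibility of the lexicographic order does not use simplicity. *)
move=> _; exists (lex_gt (fun x : T => val (enum_rank x))).
exact/lex_gt_admissible/val_enum_rank_inj.
Qed.
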